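(* Let $p$ be an odd prime and $k\ge0$. Call a pair $(B,C)\in\mathbb{Z}_p^2$ admissible if $p^k\mid B$, $p^{k+1}\nmid B$ and $p^{k+1}\mid C$. (1) Let $A,A'\in\mathbb{Z}_p$, let $(B,C)$ and $(B',C')$ be admissible, and assume $p\nmid A^2-C^2$ and $p\nmid A'^2-C'^2$. If $f_{(A,B,C)}\equiv f_{(A',B',C')}\pmod{p^{2k+4}}$, then $A\equiv A'\pmod{p^{2k+2}}$. (2) Fix $A,A'\in\mathbb{Z}_p$ and an admissible pair $(B,C)$, with $p\nmid A^2-C^2$ and $A\equiv A'\pmod{p^{2k+2}}$. Then there is exactly one residue class $h\in(\mathbb{Z}/p^{2k+4}\mathbb{Z})[x]$ for which the following holds: there exists an admissible pair $(B',C')$ with $p^2(B'x+C')^2\equiv h\pmod{p^{2k+4}}$ and $f_{(A,B,C)}\equiv f_{(A',B',C')}\pmod{p^{2k+4}}$.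
   Context: For $A,B,C\in\mathbb{Z}_p$, define $f_{(A,B,C)}(x)=(x^2+pA)^2-p^2(Bx+C)^2\in\mathbb{Z}_p[x]$. Congruences of polynomials are coefficientwise. *)

From HB Require Import structures.
From mathcomp Require Import boolp.
From mathcomp Require Import all_boot all_order all_algebra.
Set Implicit Arguments. Unset Strict Implicit. Unset Printing Implicit Defensive.
Import Order.TTheory GRing.Theory Num.Theory.
Local Open Scope ring_scope.

(* The ring of p-adic integers Z_p, built as the inverse limit              *)
(*   Z_p = lim_n  Z / p^n Z,                                                *)
(* i.e. sequences (x_n)_n of canonical residues x_n in [0, p^n) with        *)
(* x_n = x_(n+1) mod p^n.  As for mathcomp's 'Z_p, the modulus used is      *)
(* maxn p 2, so that the structure is a genuine (nonzero) ring for every p; *)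
(* for a prime p this is exactly Z_p.                                       *)

Section PadicIntegers.
Variable p : nat.

Definition zp_base : nat := maxn p 2.
Definition zp_md (n : nat) : int := (zp_base ^ n)%N%:Z.

Record padic_int := MkPadic {
  zps : nat -> int;
  zpsK : forall n, zps n = (zps n.+1 %% zp_md n)%Z }.

Lemma zp_md_dvd n : (zp_md n %| zp_md n.+1)%Z.
Proof.
rewrite /zp_md expnS; apply/dvdzP; exists (zp_base%:Z).
by rewrite -PoszM mulnC.
Qed.

Lemma modz_modz (a M m : int) : (m %| M)%Z -> ((a %% M)%Z %% m = a %% m)%Z.
Proof.
move=> /dvdzP [c ->].
rewrite [in RHS](divz_eq a (c * m)) mulrA modzMDl //.
Qed.

Definition zp_coh (f : nat -> int) := forall n, (f n.+1 = f n %[mod zp_md n])%Z.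

Lemma zp_coh_canon (f : nat -> int) (h : zp_coh f) n :
  (f n %% zp_md n = (f n.+1 %% zp_md n.+1)%Z %% zp_md n)%Z.
Proof. by rewrite modz_modz ?zp_md_dvd // h. Qed.

Definition zp_mk (f : nat -> int) (h : zp_coh f) : padic_int :=
  @MkPadic (fun n => f n %% zp_md n)%Z (zp_coh_canon h).

Lemma zp_eq (x y : padic_int) : zps x =1 zps y -> x = y.
Proof.
case: x y => [f hf] [g hg] /= /funext e; subst g.
by rewrite (Prop_irrelevance hf hg).
Qed.

Lemma zps_canon (x : padic_int) n : (zps x n %% zp_md n = zps x n)%Z.
Proof. by rewrite [in RHS]zpsK [in LHS]zpsK modz_mod. Qed.

Lemma zps_coh (x : padic_int) : zp_coh (zps x).
Proof. by move=> n; rewrite [in RHS]zpsK modz_mod. Qed.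

Lemma zp_mkE f h n : zps (@zp_mk f h) n = (f n %% zp_md n)%Z.
Proof. by []. Qed.

Lemma zp_coh_cst c : zp_coh (fun _ => c). Proof. by []. Qed.

Lemma zp_coh_add (x y : padic_int) : zp_coh (fun n => zps x n + zps y n).
Proof.
move=> n /=; rewrite -modzDml -modzDmr (zps_coh x n) (zps_coh y n).
by rewrite modzDml modzDmr.
Qed.

Lemma zp_coh_opp (x : padic_int) : zp_coh (fun n => - zps x n).
Proof. by move=> n /=; rewrite -modzNm (zps_coh x n) modzNm. Qed.

Lemma zp_coh_mul (x y : padic_int) : zp_coh (fun n => zps x n * zps y n).
Proof.
move=> n /=; rewrite -modzMml -modzMmr (zps_coh x n) (zps_coh y n).
by rewrite modzMml modzMmr.
Qed.

Definition zp_zero := zp_mk (zp_coh_cst 0).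
Definition zp_one := zp_mk (zp_coh_cst 1).
Definition zp_add x y := zp_mk (zp_coh_add x y).
Definition zp_opp x := zp_mk (zp_coh_opp x).
Definition zp_mul x y := zp_mk (zp_coh_mul x y).

HB.instance Definition _ := gen_eqMixin padic_int.
HB.instance Definition _ := gen_choiceMixin padic_int.

Lemma zp_addA : associative zp_add.
Proof.
move=> x y z; apply: zp_eq => n /=.
by rewrite modzDml modzDmr addrA.
Qed.

Lemma zp_addC : commutative zp_add.
Proof. by move=> x y; apply: zp_eq => n /=; rewrite addrC. Qed.

Lemma zp_add0 : left_id zp_zero zp_add.
Proof. by move=> x; apply: zp_eq => n /=; rewrite modzDml add0r zps_canon. Qed.

Lemma zp_addN : left_inverse zp_zero zp_opp zp_add.
Proof.
move=> x; apply: zp_eq => n /=.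
by rewrite modzDml addNr.
Qed.

HB.instance Definition _ :=
  GRing.isZmodule.Build padic_int zp_addA zp_addC zp_add0 zp_addN.

Lemma zp_mulA : associative zp_mul.
Proof.
move=> x y z; apply: zp_eq => n /=.
by rewrite modzMml modzMmr mulrA.
Qed.

Lemma zp_mulC : commutative zp_mul.
Proof. by move=> x y; apply: zp_eq => n /=; rewrite mulrC. Qed.

Lemma zp_mul1 : left_id zp_one zp_mul.
Proof. by move=> x; apply: zp_eq => n /=; rewrite modzMml mul1r zps_canon. Qed.

Lemma zp_mulDl : left_distributive zp_mul zp_add.
Proof.
move=> x y z; apply: zp_eq => n /=.
by rewrite modzMml modzDml modzDmr mulrDl.
Qed.

Lemma zp_one_neq0 : zp_one != zp_zero.
Proof.
apply/eqP => /(congr1 (fun x => zps x 1)) /=.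
rewrite /zp_md expn1 mod0z modz_small //.
by rewrite /zp_base ltz_nat (leq_trans _ (leq_maxr p 2)).
Qed.

HB.instance Definition _ :=
  GRing.Zmodule_isComNzRing.Build padic_int zp_mulA zp_mulC zp_mul1 zp_mulDl
    zp_one_neq0.

Definition zp_red (N : nat) (x : padic_int) : 'Z_(p ^ N) := (zps x N)%:~R.

End PadicIntegers.
Arguments zp_red : clear implicits.

Notation "''Z_[' p ']'" := (padic_int p) (format "''Z_[' p ]").

Unset Implicit Arguments.

Definition zp_cong (p j : nat) (a b : 'Z_[p]) : Prop :=
  exists c : 'Z_[p], a - b = (p%:R) ^+ j * c.

Definition zp_dvd (p j : nat) (a : 'Z_[p]) : Prop :=
  exists c : 'Z_[p], a = (p%:R) ^+ j * c.

Definition zp_poly_cong (p j : nat) (f g : {poly 'Z_[p]}) : Prop :=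
  forall i : nat, zp_cong p j f`_i g`_i.

Definition fABC (p : nat) (A B C : 'Z_[p]) : {poly 'Z_[p]} :=
  ('X ^+ 2 + (p%:R * A)%:P) ^+ 2 - ((p%:R : 'Z_[p]) ^+ 2)%:P * (B *: 'X + C%:P) ^+ 2.

Definition gBC (p : nat) (B C : 'Z_[p]) : {poly 'Z_[p]} :=
  ((p%:R : 'Z_[p]) ^+ 2)%:P * (B *: 'X + C%:P) ^+ 2.

Definition admissible (p k : nat) (B C : 'Z_[p]) : Prop :=
  zp_dvd p k B /\ ~ zp_dvd p k.+1 B /\ zp_dvd p k.+1 C.

From HB Require Import structures.
From mathcomp Require Import all_boot all_algebra.
From mathcomp Require Import ring.
Set Implicit Arguments. Unset Strict Implicit. Unset Printing Implicit Defensive.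
Import GRing.Theory Num.Theory.
Local Open Scope ring_scope.

(* For (1), comparing the x^2-coefficients of the two quartics gives
   2 (A - A') = 0 mod p^(2k+1), and comparing the constant terms gives
   (A + A') (A - A') = 0 mod p^(2k+2); since p does not divide A, the factor
   A + A' = 2 A mod p is a unit mod p and can be cancelled.
   For (2), write B = p^k b with b u = 1 mod p and A = A' + p^(2k+2) d: the pair
   (B - p^(k+1) d u, C) is admissible and satisfies the congruence, and every
   solution gives the same p^2 (B' x + C')^2 = (x^2 + p A')^2 - f_(A',B',C')
   modulo p^(2k+4). *)

Section ResidueMap.
Variable p : nat.

Lemma zp_md1E : zp_md p 1 = ((Zp_trunc p).+2)%:Z.
Proof. by rewrite /zp_md /zp_base expn1; case: p => [|[|n]]. Qed.

Lemma intr_Zp_mod (z : int) : (((z %% zp_md p 1)%Z)%:~R : 'Z_p) = z%:~R.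
Proof.
have md0 : ((Zp_trunc p).+2%:R : 'Z_p) = 0 by apply: val_inj; rewrite Zp_nat /= modnn.
by rewrite zp_md1E /modz intrB intrM -pmulrn md0 mulr0 subr0.
Qed.

(* No primality is needed here: for [p < 2], ['Z_p] and the modulus of ['Z_[p]] are both [2]. *)
Definition zp_modp (x : 'Z_[p]) : 'Z_p := (zps x 1)%:~R.

Lemma zp_modp_is_zmod_morphism : zmod_morphism zp_modp.
Proof. by move=> x y; rewrite /zp_modp /= !intr_Zp_mod intrD intr_Zp_mod intrN. Qed.

Lemma zp_modp_is_monoid_morphism : monoid_morphism zp_modp.
Proof.
by split=> [|x y]; rewrite /zp_modp /= intr_Zp_mod ?intrM // mulr1z.
Qed.

HB.instance Definition _ := GRing.isZmodMorphism.Build _ _ zp_modp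
  zp_modp_is_zmod_morphism.
HB.instance Definition _ := GRing.isMonoidMorphism.Build _ _ zp_modp
  zp_modp_is_monoid_morphism.

End ResidueMap.

Section PrimeResidue.
Variable p : nat.
Hypothesis p_prime : prime p.
Local Notation P := (p%:R : 'Z_[p]).

Lemma zp_mdE n : zp_md p n = (p ^ n)%N%:Z.
Proof. by rewrite /zp_md /zp_base (maxn_idPl (prime_gt1 p_prime)). Qed.

Lemma zps_nat m n : zps (m%:R : 'Z_[p]) n = (m%:Z %% zp_md p n)%Z.
Proof.
elim: m => [|m IH]; first by rewrite /= mod0z.
by rewrite -addn1 natrD /= IH modzDml modzDmr PoszD.
Qed.

Lemma zps_mod_md (x : 'Z_[p]) n j : (zps x (n + j) %% zp_md p n)%Z = zps x n.
Proof.
elim: j => [|j IH]; first by rewrite addn0 zps_canon.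
rewrite addnS -IH [zps x (n + j)]zpsK modz_modz //.
by rewrite !zp_mdE /dvdz unfold_in /= dvdn_exp2l // leq_addr.
Qed.

Lemma zps1_nat (x : 'Z_[p]) : exists2 m, zps x 1 = m%:Z & (m < p)%N.
Proof.
have md_gt0 : 0 < zp_md p 1 by rewrite zp_mdE ltz_nat expn_gt0 prime_gt0.
have x1_ge0 : 0 <= zps x 1 by rewrite -zps_canon modz_ge0 // lt0r_neq0.
have x1_lt : zps x 1 < zp_md p 1 by rewrite -zps_canon ltz_pmod.
by case: (zps x 1) x1_ge0 x1_lt => // m _; rewrite zp_mdE expn1 ltz_nat; exists m.
Qed.

Lemma zp_dvd1_zps1 (x : 'Z_[p]) : zps x 1 = 0 -> zp_dvd p 1 x.
Proof.
move=> x1_0.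
have pn0 : p%:Z != 0 by rewrite eqz_nat -lt0n prime_gt0.
pose f n := (zps x n.+1 %/ p%:Z)%Z.
have fpE n : (f n * p%:Z)%R = zps x n.+1.
  apply: divzK; apply/dvdz_mod0P.
  by have := zps_mod_md x 1 n; rewrite add1n x1_0 zp_mdE expn1.
have f_coh : zp_coh p f.
  move=> n; apply/eqP; rewrite eqz_mod_dvd -(dvdz_mul2r pn0) mulrBl !fpE.
  rewrite !zp_mdE -PoszM -expnSr -zp_mdE -eqz_mod_dvd; apply/eqP.
  by rewrite -zpsK zps_canon.
exists (zp_mk f_coh); rewrite expr1; apply: zp_eq => n /=.
rewrite zps_nat modzMml modzMmr mulrC fpE.
by rewrite -(zps_mod_md x n 1) addn1.
Qed.

Lemma zp_lreg_p : GRing.lreg P.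
Proof.
move=> x y /eqP; rewrite -subr_eq0 -mulrBr => /eqP Pxy0.
apply/eqP; rewrite -subr_eq0; apply/eqP; move: (x - y) Pxy0 => z Pz0.
apply: zp_eq => n.
have : zps (P * z) n.+1 = 0 by rewrite Pz0 /= mod0z.
rewrite /= zps_nat modzMml => /dvdz_mod0P.
rewrite !zp_mdE expnS PoszM dvdz_mul2l ?eqz_nat -?lt0n ?prime_gt0 // -zp_mdE.
by move/dvdz_mod0P; rewrite -(zps_mod_md z n 1) addn1 /= mod0z.
Qed.

Lemma zp_lreg_pX n : GRing.lreg (P ^+ n).
Proof. exact/lregX/zp_lreg_p. Qed.

Lemma zp_modp_mulp (x : 'Z_[p]) : zp_modp (P * x) = 0.
Proof. by rewrite rmorphM rmorph_nat pchar_Zp ?prime_gt1 // mul0r. Qed.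

Lemma natr_Zp_eq0 m : (m%:R == 0 :> 'Z_p) = (p %| m)%N.
Proof. by rewrite -val_eqE /= val_Zp_nat ?prime_gt1. Qed.

Lemma zp_modp_eq0 (x : 'Z_[p]) : zp_modp x = 0 <-> zp_dvd p 1 x.
Proof.
split=> [|[c ->]]; last by rewrite expr1 zp_modp_mulp.
have [[|m] x1m m_lt] := zps1_nat x; first by move=> _; apply: zp_dvd1_zps1.
by rewrite /zp_modp x1m -pmulrn => /eqP; rewrite natr_Zp_eq0 gtnNdvd.
Qed.

Lemma zp_modp_unitP (x : 'Z_[p]) : zp_modp x \is a GRing.unit <-> ~ zp_dvd p 1 x.
Proof.
rewrite -zp_modp_eq0; have [m x1m m_lt] := zps1_nat x.
rewrite /zp_modp x1m -pmulrn unitZpE ?prime_gt1 // prime_coprime //.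
by rewrite -natr_Zp_eq0; split=> [/eqP | /eqP].
Qed.

Lemma zp_modp_unit_lift (w : 'Z_[p]) :
  zp_modp w \is a GRing.unit -> exists u v, w * u = 1 + P * v.
Proof.
move=> w_unit; pose r := (zp_modp w)^-1; exists (r : nat)%:R.
have [v wv] : zp_dvd p 1 (w * (r : nat)%:R - 1).
  by apply/zp_modp_eq0; rewrite rmorphB rmorphM rmorph_nat natr_Zp rmorph1 mulrV ?subrr.
by exists v; rewrite -[P]expr1 -wv addrC subrK.
Qed.

Lemma Gauss_zp_dvd (w x : 'Z_[p]) n :
  zp_modp w \is a GRing.unit -> zp_dvd p n (w * x) -> zp_dvd p n x.
Proof.
move=> /zp_modp_unit_lift [u [v wuv]].
elim: n x => [|n IH] x [e wxe]; first by exists x; rewrite mul1r.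
have [y xy] : zp_dvd p n x by apply: IH; exists (P * e); rewrite wxe exprSr mulrA.
have wyPe : w * y = P * e.
  by apply: (zp_lreg_pX (n := n)); rewrite mulrCA -xy wxe exprSr mulrA.
exists (e * u - v * y); rewrite xy exprSr -mulrA; congr (_ * _).
transitivity (y * (w * u - P * v)); first by rewrite wuv addrK mulr1.
by rewrite mulrBr mulrA (mulrC y) wyPe; ring.
Qed.

Lemma zp_red_cong N (a b : 'Z_[p]) : zp_cong p N a b -> zp_red p N a = zp_red p N b.
Proof.
move=> [c abc]; have -> : a = b + P ^+ N * c by rewrite -abc addrC subrK.
rewrite /zp_red /= -natrX zps_nat -zp_mdE modzz mul0r mod0z addr0.
by rewrite zps_canon.
Qed.

End PrimeResidue.

Lemma expr2k_add (R : pzSemiRingType) (x : R) k j :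
  x ^+ (2 * k + j) = x ^+ k * x ^+ k * x ^+ j.
Proof. by rewrite exprD mul2n -addnn exprD. Qed.

Lemma eq_of_subr_eq (R : zmodType) (u v x y : R) : u = v -> x - y = u - v -> x = y.
Proof. by move=> -> /eqP; rewrite subrr subr_eq0 => /eqP. Qed.

Section Claim.
Variables (p k : nat).
Hypothesis p_prime : prime p.
Local Notation P := (p%:R : 'Z_[p]).

Lemma admissibleP (B C : 'Z_[p]) :
  admissible p k B C <->
  exists b c, [/\ B = P ^+ k * b, ~ zp_dvd p 1 b & C = P ^+ k.+1 * c].
Proof.
split=> [[[b ->] [B_ndvd [c ->]]] | [b [c [-> b_ndvd ->]]]].
  exists b, c; split=> // -[e be].
  by apply: B_ndvd; exists e; rewrite be expr1 mulrA -exprSr.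
split; [by exists b | split; last by exists c].
move=> [e]; rewrite exprSr -mulrA => /(zp_lreg_pX p_prime) be.
by apply: b_ndvd; exists e; rewrite be expr1.
Qed.

Lemma fABCE (A B C : 'Z_[p]) : fABC p A B C =
  'X ^+ 4 + (2 * P * A - P ^+ 2 * B ^+ 2)%:P * 'X ^+ 2
  + (- (2 * P ^+ 2 * B * C))%:P * 'X + (P ^+ 2 * (A ^+ 2 - C ^+ 2))%:P.
Proof.
rewrite /fABC -!mul_polyC !(rmorphD, rmorphB, rmorphM, rmorphN, rmorphXn) /=.
by rewrite !rmorph_nat; ring.
Qed.

Lemma coef0_fABC (A B C : 'Z_[p]) : (fABC p A B C)`_0 = P ^+ 2 * (A ^+ 2 - C ^+ 2).
Proof. by rewrite fABCE !coefE /=; ring. Qed.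

Lemma coef2_fABC (A B C : 'Z_[p]) : (fABC p A B C)`_2 = 2 * P * A - P ^+ 2 * B ^+ 2.
Proof. by rewrite fABCE !coefE /=; ring. Qed.

Lemma zp_modp2_unit : odd p -> zp_modp (2 : 'Z_[p]) \is a GRing.unit.
Proof. by move=> p_odd; rewrite rmorph_nat unitZpE ?prime_gt1 ?coprimen2. Qed.

Lemma fABC_cong_congA (A A' B C B' C' : 'Z_[p]) : odd p ->
  admissible p k B C -> admissible p k B' C' ->
  ~ zp_dvd p 1 (A ^+ 2 - C ^+ 2) ->
  zp_poly_cong p (2 * k + 4) (fABC p A B C) (fABC p A' B' C') ->
  zp_cong p (2 * k + 2) A A'.
Proof.
move=> p_odd /admissibleP[b [c [-> _ ->]]] /admissibleP[b' [c' [-> _ ->]]] AC_unit fcong.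
have [e2 cong2] := fcong 2%N; have [e0 cong0] := fcong 0%N.
rewrite !coef2_fABC !coef0_fABC !expr2k_add !(exprSr _ k) in cong2 cong0.
have [G AA'G] : zp_dvd p (2 * k + 1) (A - A').
  apply: (Gauss_zp_dvd p_prime (zp_modp2_unit p_odd)).
  exists (b ^+ 2 - b' ^+ 2 + P ^+ 2 * e2); apply: (zp_lreg_p p_prime).
  by rewrite expr2k_add; apply: (eq_of_subr_eq cong2); ring.
have A_unit : zp_modp A \is a GRing.unit.
  apply/(zp_modp_unitP p_prime) => -[a Aa]; apply: AC_unit.
  by exists (P * a ^+ 2 - P * (P ^+ k * c) ^+ 2); rewrite Aa (exprS _ k); ring.
have AA'_unit : zp_modp (A + A') \is a GRing.unit.
  have -> : A + A' = 2 * A - P * (P ^+ k * P ^+ k * G).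
    by rewrite -[A' in LHS](subKr A) AA'G expr2k_add; ring.
  by rewrite rmorphB /= zp_modp_mulp // subr0 rmorphM unitrM zp_modp2_unit.
apply: (Gauss_zp_dvd p_prime AA'_unit).
exists (e0 + c ^+ 2 - c' ^+ 2); apply: (zp_lreg_pX p_prime (n := 2)).
by rewrite expr2k_add; apply: (eq_of_subr_eq cong0); ring.
Qed.

Lemma fABC_shift_cong (A' b c d u v : 'Z_[p]) : b * u = 1 + P * v ->
  zp_poly_cong p (2 * k + 4)
    (fABC p (A' + P ^+ (2 * k + 2) * d) (P ^+ k * b) (P ^+ k.+1 * c))
    (fABC p A' (P ^+ k * (b - P * (d * u))) (P ^+ k.+1 * c)).
Proof.
move=> buv i; rewrite /zp_cong !fABCE !coefE !expr2k_add !(exprSr _ k).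
case: i => [|[|[|[|[|i]]]]] /=.
- by exists (d * (2 * A' + P ^+ k * P ^+ k * P ^+ 2 * d)); ring.
- by exists (- (2 * c * d * u)); ring.
- by exists (d ^+ 2 * u ^+ 2 - 2 * d * v); ring: buv.
- by exists 0; ring.
- by exists 0; ring.
- by exists 0; ring.
Qed.

Lemma gBC_fABC (A B C : 'Z_[p]) :
  gBC p B C = ('X ^+ 2 + (P * A)%:P) ^+ 2 - fABC p A B C.
Proof. by rewrite /fABC /gBC; ring. Qed.

Lemma gBC_red_unique N (f : {poly 'Z_[p]}) (A' B1 C1 B2 C2 : 'Z_[p]) :
  zp_poly_cong p N f (fABC p A' B1 C1) -> zp_poly_cong p N f (fABC p A' B2 C2) ->
  map_poly (zp_red p N) (gBC p B1 C1) = map_poly (zp_red p N) (gBC p B2 C2).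
Proof.
move=> cong1 cong2; have red0 : zp_red p N 0 = 0 by rewrite /zp_red /= mod0z.
apply/polyP => i; rewrite !coef_map_id0 //; apply: (zp_red_cong p_prime).
have [e1 fe1] := cong1 i; have [e2 fe2] := cong2 i.
exists (e1 - e2); rewrite (gBC_fABC A' B1) (gBC_fABC A' B2) mulrBr -fe1 -fe2 !coefB; ring.
Qed.

Lemma fABC_cong_gBC_exists_unique (A A' B C : 'Z_[p]) :
  admissible p k B C -> zp_cong p (2 * k + 2) A A' ->
  exists! h : {poly 'Z_(p ^ (2 * k + 4))},
    exists B' C' : 'Z_[p],
      [/\ admissible p k B' C',
          map_poly (zp_red p (2 * k + 4)) (gBC p B' C') = h &
          zp_poly_cong p (2 * k + 4) (fABC p A B C) (fABC p A' B' C')].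
Proof.
move=> /admissibleP[b [c [-> b_ndvd ->]]] [d AA'd].
have [u [v buv]] := zp_modp_unit_lift p_prime (proj2 (zp_modp_unitP p_prime b) b_ndvd).
have -> : A = A' + P ^+ (2 * k + 2) * d by rewrite -AA'd addrC subrK.
pose B' := P ^+ k * (b - P * (d * u)).
have fcong := fABC_shift_cong A' c d buv.
exists (map_poly (zp_red p (2 * k + 4)) (gBC p B' (P ^+ k.+1 * c))); split.
  exists B', (P ^+ k.+1 * c); split=> //; apply/admissibleP.
  exists (b - P * (d * u)), c; split=> // -[e be]; apply: b_ndvd.
  by exists (e + d * u); apply: (eq_of_subr_eq be); ring.
by move=> h [B2 [C2 [_ <- fcong2]]]; apply: gBC_red_unique fcong fcong2.
Qed.

End Claim.

Theorem claim5 (p k : nat) (p_prime : prime p) (p_odd : odd p) :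
  (forall A A' B C B' C' : 'Z_[p],
     admissible p k B C -> admissible p k B' C' ->
     ~ zp_dvd p 1 (A ^+ 2 - C ^+ 2) -> ~ zp_dvd p 1 (A' ^+ 2 - C' ^+ 2) ->
     zp_poly_cong p (2 * k + 4)%N (fABC p A B C) (fABC p A' B' C') ->
     zp_cong p (2 * k + 2)%N A A')
  /\
  (forall A A' B C : 'Z_[p],
     admissible p k B C -> ~ zp_dvd p 1 (A ^+ 2 - C ^+ 2) ->
     zp_cong p (2 * k + 2)%N A A' ->
     exists! h : {poly 'Z_(p ^ (2 * k + 4))},
       exists B' C' : 'Z_[p],
         [/\ admissible p k B' C',
             map_poly (zp_red p (2 * k + 4)%N) (gBC p B' C') = h &
             zp_poly_cong p (2 * k + 4)%N (fABC p A B C) (fABC p A' B' C')]).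
Proof.
(* Neither part needs the condition on A'^2 - C'^2 nor, for (2), on A^2 - C^2. *)
split=> [A A' B C B' C' adm adm' AC_unit _ fcong | A A' B C adm _ AA'].
  exact: (fABC_cong_congA p_prime p_odd adm adm' AC_unit fcong).
exact: (fABC_cong_gBC_exists_unique p_prime adm AA').
Qed.
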